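(* Let $\mathcal{I}(X,\mathcal{R})$ be an index coding problem with messages $X=\{x_1,\dots,x_m\}$, each in $\mathbb{F}_q^n$, and receivers $R_i=(x_{f(i)},H_i)\in\mathcal{R}$, each with a prescribed error-correcting capability $\delta_i\in\mathbb{Z}_{\ge0}$ satisfying $2\delta_i\le c$. Then there exists a vector linear differential error correcting index code over $\mathbb{F}_q$ of length $c$ and dimension $n$ for this problem (with capabilities $\delta_i$) if and only if there exists a discrete polymatroid $\mathbb{D}$ on the ground set $\{1,\dots,m+2c\}$, representable over $\mathbb{F}_q$, with rank function $r$ and $r(\{1,\dots,m+2c\})=mn+c$, satisfying: (A) $r(\{j\})=n$ for all $j\in\{1,\dots,m\}$; $r(\{1,\dots,m+c\})=mn+c$; and $r(\{m+j\})=1$ for all $j\in\{1,\dots,2c\}$; (B) for every $j\in\{1,\dots,c\}$: $r(\{1,\dots,m\}\cup\{m+j,m+c+j\})=r(\{1,\dots,m\}\cup\{m+j\})=r(\{1,\dots,m\}\cup\{m+c+j\})$; (C) for every receiver $R_i=(x_{f(i)},H_i)$ and every set $\mathcal{F}=\{i_1,\dots,i_{2\delta_i}\}\subseteq\{1,\dots,c\}$ with $|\mathcal{F}|=2\delta_i$, setting $$T_{\mathcal{F},i}=\{1,\dots,m+c\}\setminus\big(\overline{H_i}\cup\{m+i_1,\dots,m+i_{2\delta_i}\}\big),\qquad \mathbb{D}_{\mathcal{F},i}=\mathbb{D}/T_{\mathcal{F},i},$$ one has $r_{\mathbb{D}_{\mathcal{F},i}}(\{f(i)\}\cup S)=r_{\mathbb{D}_{\mathcal{F},i}}(S)$,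 where $S=\{m+c+1,\dots,m+2c\}$ and $\overline{H_i}=\{1,\dots,m\}\setminus\{j: x_j\in H_i\}$.
   Context: Index coding problem: messages $x_1,\dots,x_m\in\mathbb{F}_q^n$ (row vectors), $y=[x_1\ \cdots\ x_m]\in\mathbb{F}_q^{mn}$; each receiver $R_i=(x_{f(i)},H_i)$ demands $x_{f(i)}$ and knows side information $H_i\subseteq X\setminus\{x_{f(i)}\}$. A differential error correcting index code of length $c$ and dimension $n$ is a map $\mathfrak{C}:\mathbb{F}_q^{mn}\to\mathbb{F}_q^c$ such that for each receiver $R_i$ there is a decoding function $\psi_{R_i}$ with $\psi_{R_i}(\mathfrak{C}(y)+\epsilon_i,H_i)=x_{f(i)}$ for all $y\in\mathbb{F}_q^{mn}$ and all $\epsilon_i\in\mathbb{F}_q^c$ of Hamming weight at most $\delta_i$. It is vector linear if $\mathfrak{C}(y)=yL$ for some $mn\times c$ matrix $L$ over $\mathbb{F}_q$. Discrete polymatroid: a nonempty finite $\mathbb{D}\subseteq\mathbb{Z}_{\ge0}^N$ closed under taking componentwise-smaller nonnegative integer vectors and such that for $u,v\in\mathbb{D}$ with $|u|<|v|$ there is $w\in\mathbb{D}$ with $u<w\le u\vee v$; its rank function is $r(A)=\max\{\sum_{j\in A}u_j:u\in\mathbb{D}\}$, $r(\emptyset)=0$, and it determines $\mathbb{D}$. $\mathbb{D}$ is representable over $\mathbb{F}_q$ if there are subspaces $V_1,\dots,V_N$ of an $\mathbb{F}_q$-vector space with $\dim(\sum_{j\in A}V_j)=r(A)$ for all $A$.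 For $T$ a subset of the ground set $E$, the contraction $\mathbb{D}/T$ has ground set $E\setminus T$ and rank function $r_{\mathbb{D}/T}(A)=r(A\cup T)-r(T)$. *)

From HB Require Import structures.
From mathcomp Require Import all_boot all_order all_algebra all_fingroup all_field.
Set Implicit Arguments. Unset Strict Implicit. Unset Printing Implicit Defensive.
Import GRing.Theory.
Local Open Scope ring_scope.

Definition hweight (F : fieldType) (c : nat) (e : 'rV[F]_c) : nat :=
  #|[set j : 'I_c | e 0 j != 0]|.

(* The message vector y = [x_1 ... x_m] in F^(mn); the messages are the rows of X. *)
Definition msg_vec (F : fieldType) (m n : nat) (X : 'M[F]_(m, n)) : 'rV[F]_(m * n) :=
  mxvec X.

Definition side_info (F : fieldType) (m n : nat) (H : {set 'I_m}) (X : 'M[F]_(m, n))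
  : 'M[F]_(m, n) := \matrix_(j, k) (if j \in H then X j k else 0).

Definition is_vl_diff_ecic (F : fieldType) (m n c N : nat)
  (f : 'I_N -> 'I_m) (H : 'I_N -> {set 'I_m}) (delta : 'I_N -> nat)
  (L : 'M[F]_(m * n, c)) : Prop :=
  forall i : 'I_N, exists psi : 'rV[F]_c -> 'M[F]_(m, n) -> 'rV[F]_n,
    forall (X : 'M[F]_(m, n)) (eps : 'rV[F]_c),
      (hweight eps <= delta i)%N ->
      psi (msg_vec X *m L + eps) (side_info (H i) X) = row (f i) X.

Local Open Scope nat_scope.

Definition dsize (N : nat) (u : {ffun 'I_N -> nat}) : nat := \sum_j u j.
Definition dle (N : nat) (u v : {ffun 'I_N -> nat}) : bool := [forall j, u j <= v j].
Definition dlt (N : nat) (u v : {ffun 'I_N -> nat}) : bool := dle u v && (u != v).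
Definition djoin (N : nat) (u v : {ffun 'I_N -> nat}) : {ffun 'I_N -> nat} :=
  [ffun j => maxn (u j) (v j)].

(* D is a finite subset of Z_{>=0}^N, given as a list. *)
Definition is_discrete_polymatroid (N : nat) (D : seq {ffun 'I_N -> nat}) : Prop :=
  [/\ D != [::],
      (forall u v, u \in D -> dle v u -> v \in D) &
      (forall u v, u \in D -> v \in D -> dsize u < dsize v ->
         exists w, [/\ w \in D, dlt u w & dle w (djoin u v)])].

Definition dp_rank (N : nat) (D : seq {ffun 'I_N -> nat}) (A : {set 'I_N}) : nat :=
  \max_(u <- D) \sum_(j in A) u j.

(* rank function of the contraction D/T, evaluated on subsets A of E \ T *)
Definition dp_contract_rank (N : nat) (D : seq {ffun 'I_N -> nat}) (T A : {set 'I_N})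
  : nat := dp_rank D (A :|: T) - dp_rank D T.

Definition dp_representable (F : fieldType) (N : nat) (D : seq {ffun 'I_N -> nat}) : Prop :=
  exists (d : nat) (V : 'I_N -> 'M[F]_d),
    forall A : {set 'I_N}, \rank (\sum_(j in A) V j)%MS = dp_rank D A.

(* message j         |-> j
   coordinate j      |-> m + j
   coordinate j (S)  |-> m + c + j *)
Definition gmsg (m c : nat) (j : 'I_m) : 'I_(m + (c + c)) := lshift (c + c) j.
Definition gcode (m c : nat) (j : 'I_c) : 'I_(m + (c + c)) := rshift m (lshift c j).
Definition gS (m c : nat) (j : 'I_c) : 'I_(m + (c + c)) := rshift m (rshift c j).

Definition Msgs (m c : nat) : {set 'I_(m + (c + c))} := [set gmsg c j | j : 'I_m].
Definition Codes (m c : nat) : {set 'I_(m + (c + c))} := [set gcode m j | j : 'I_c].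
Definition Sset (m c : nat) : {set 'I_(m + (c + c))} := [set gS m j | j : 'I_c].

Definition Tset (m c : nat) (Hi : {set 'I_m}) (Fs : {set 'I_c}) : {set 'I_(m + (c + c))} :=
  (Msgs m c :|: Codes m c) :\: ([set gmsg c j | j in ~: Hi] :|: [set gcode m j | j in Fs]).

(* A vector linear code [L] is the same thing as a subspace
   arrangement in [F^(mn+c)]: message [j] spans the coordinates of [x_j], the
   [l]-th code symbol spans the vector pairing [e_l] with the column of [L] that
   computes it, and the [l]-th element of [S] spans [e_l] alone.  Ranks of sums of
   subspaces are normalised, monotone and submodular, so the bounded vectors below
   them form a representable discrete polymatroid with that rank function; (A) and
   (B) hold by construction, and conversely (A) and (B) force every
   representation into this shape after a change of basis, which recovers [L].
   By linearity, decoding with [delta_i] errors means that no message matrix with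
   zero side information and codeword supported on [2 delta_i] coordinates has a
   nonzero row [f i]; dually, every linear functional vanishing on the [S]-spaces
   and on [T_(F,i)] vanishes on the space of [x_(f i)], which is condition (C). *)

From HB Require Import structures.
From mathcomp Require Import all_boot all_order all_algebra all_fingroup all_field.
From mathcomp Require Import zify ring.

Set Implicit Arguments.
Unset Strict Implicit.
Unset Printing Implicit Defensive.

Import GRing.Theory.

Section SubmodularPolymatroid.

Variables (N : nat) (rho : {set 'I_N} -> nat).
Hypothesis rho0 : rho set0 = 0.
Hypothesis rho_mono : forall A B : {set 'I_N}, A \subset B -> rho A <= rho B.
Hypothesis rho_submod :
  forall A B : {set 'I_N}, rho (A :|: B) + rho (A :&: B) <= rho A + rho B.

Implicit Types (u v : {ffun 'I_N -> nat}) (A B T : {set 'I_N}).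

Definition wsum u A : nat := \sum_(j in A) u j.

Definition rho_indep u : bool := [forall A, wsum u A <= rho A].

Definition bump u j : {ffun 'I_N -> nat} := [ffun k => u k + (k == j)].

Lemma wsum_bump u j A : wsum (bump u j) A = wsum u A + (j \in A).
Proof.
rewrite /wsum (eq_bigr (fun k => u k + (k == j))) => [|k _]; last by rewrite ffunE.
rewrite big_split /=; congr (_ + _); case: (boolP (j \in A)) => jA.
  by rewrite (bigD1 j) //= eqxx big1 // => k /andP[_ /negbTE ->].
by rewrite big1 // => k kA; apply/eqP; rewrite eqb0; apply: contraNneq jA => <-.
Qed.

Lemma wsum_setU_setI u A B : wsum u (A :|: B) + wsum u (A :&: B) = wsum u A + wsum u B.
Proof.
rewrite /wsum (big_setID (A := A :|: B) B) (big_setID (A := A) B) /=.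
rewrite [A :|: B]setUC setUK setDUl setDv set0U; lia.
Qed.

Lemma dsize_wsumC u T : dsize u = wsum u T + wsum u (~: T).
Proof.
by rewrite /dsize /wsum (bigID (mem T)) /=; congr (_ + _); apply: eq_bigl => j; rewrite inE.
Qed.

(* The tight sets (where [wsum u] meets [rho]) are closed under union, by
   submodularity; a union of tight sets blocking every increment in [P] covers [P]. *)
Lemma exists_tight_cover u (P : {set 'I_N}) : rho_indep u ->
    (forall j, j \in P -> ~~ rho_indep (bump u j)) ->
  exists2 T : {set 'I_N}, P \subset T & wsum u T = rho T.
Proof.
move=> iu hP; pose tight A := wsum u A == rho A.
have tight_at j : j \in P -> exists2 A : {set 'I_N}, j \in A & tight A.
  move=> /hP; rewrite negb_forall => /existsP[A]; rewrite -ltnNge wsum_bump.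
  have := forallP iu A; case jA: (j \in A) => /= hle hlt; last by lia.
  by exists A => //; apply/eqP; lia.
pose A j := odflt set0 [pick B : {set 'I_N} | (j \in B) && tight B].
have hA j : j \in P -> j \in A j /\ tight (A j).
  move=> /tight_at[B jB tB]; rewrite /A; case: pickP => [B' /andP[]|/(_ B)] //.
  by rewrite jB tB.
exists (\bigcup_(j in P) A j).
  by apply/subsetP => j jP; apply/bigcupP; exists j => //; case: (hA j jP).
apply/eqP; apply: (big_ind tight); first by rewrite /tight rho0 /wsum big_set0.
  move=> X Y /eqP tX /eqP tY; have := rho_submod X Y; have := wsum_setU_setI u X Y.
  have := forallP iu (X :|: Y); have := forallP iu (X :&: Y); rewrite /tight; lia.
by move=> j /hA[].
Qed.

Lemma rho_indep_augment u v : rho_indep u -> rho_indep v -> dsize u < dsize v ->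
  exists2 j, u j < v j & rho_indep (bump u j).
Proof.
move=> iu iv ltuv.
case: (pickP (fun j => (u j < v j) && rho_indep (bump u j))) => [j /andP[]|h].
  by exists j.
have [|T PT tT] := exists_tight_cover (P := [set j | u j < v j]) iu.
  by move=> j; rewrite inE => ltj; move: (h j); rewrite ltj /= => ->.
suff: dsize v <= dsize u by rewrite leqNgt ltuv.
rewrite (dsize_wsumC u T) (dsize_wsumC v T) leq_add //; first by rewrite tT (forallP iv).
apply: leq_sum => j; rewrite inE leqNgt; apply: contra => ltj.
by apply: (subsetP PT); rewrite inE.
Qed.

Lemma rho_indep_greedy A : exists2 u, rho_indep u & wsum u A = rho A.
Proof.
suff [u iu [_ hu]] : exists2 u, rho_indep u &
    (forall j, j \notin A -> u j = 0) /\ rho A <= wsum u A.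
  by exists u => //; apply/eqP; rewrite eqn_leq (forallP iu A) hu.
suff grow k : exists2 u, rho_indep u &
    (forall j, j \notin A -> u j = 0) /\ minn k (rho A) <= wsum u A.
  by have [u iu [su]] := grow (rho A); rewrite minnn; exists u.
elim: k => [|k [u iu [su hu]]].
  exists [ffun=> 0]; last by split=> [j _|]; rewrite ?ffunE ?min0n.
  by apply/forallP => B; rewrite /wsum big1 // => j _; rewrite ffunE.
case: (leqP (minn k.+1 (rho A)) (wsum u A)) => hk; first by exists u.
have [eqk ltk] : wsum u A = k /\ k < rho A by move: hu hk; lia.
case: (pickP (fun j => (j \in A) && rho_indep (bump u j))) => [j /andP[jA ij]|h].
  exists (bump u j) => //; split.
    by move=> j' j'A; rewrite ffunE su //; case: eqP => // e; rewrite e jA in j'A.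
  by rewrite wsum_bump jA eqk; lia.
have [|T AT tT] := exists_tight_cover (P := A) iu.
  by move=> j jA; move: (h j); rewrite jA /= => ->.
have wT : wsum u T = wsum u A.
  rewrite /wsum (big_setID (A := T) A) /= (setIidPr AT) [X in _ + X]big1 ?addn0 //.
  by move=> j; rewrite inE => /andP[/su].
have := rho_mono AT; rewrite -tT wT; lia.
Qed.

(* Every entry of an independent vector is at most [rho setT]. *)
Definition bounded_vectors : seq {ffun 'I_N -> nat} :=
  map (fun g : {ffun 'I_N -> 'I_(rho setT).+1} => [ffun j => nat_of_ord (g j)])
    (enum {: {ffun 'I_N -> 'I_(rho setT).+1}}).

Definition indep_vectors : seq {ffun 'I_N -> nat} :=
  [seq u <- bounded_vectors | rho_indep u].

Lemma mem_indep_vectors u : (u \in indep_vectors) = rho_indep u.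
Proof.
rewrite mem_filter; case iu: (rho_indep u) => //=.
apply/mapP; exists [ffun j => inord (u j) : 'I_(rho setT).+1]; first by rewrite mem_enum.
apply/ffunP => j; rewrite !ffunE inordK // ltnS.
apply: leq_trans (rho_mono (subsetT [set j])).
by have := forallP iu [set j]; rewrite /wsum big_set1.
Qed.

Lemma indep_vectors_polymatroid : is_discrete_polymatroid indep_vectors.
Proof.
split.
- have : [ffun=> 0] \in indep_vectors.
    rewrite mem_indep_vectors; apply/forallP => B.
    by rewrite /wsum big1 // => j _; rewrite ffunE.
  by apply: contraTneq => ->.
- move=> u v; rewrite !mem_indep_vectors => iu /forallP vu; apply/forallP => A.
  by apply: leq_trans (forallP iu A); apply: leq_sum => j _; apply: vu.
- move=> u v; rewrite !mem_indep_vectors => iu iv /(rho_indep_augment iu iv)[j ltj ij].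
  exists (bump u j); split; rewrite ?mem_indep_vectors //.
    rewrite /dlt; apply/andP; split; first by apply/forallP => k; rewrite ffunE leq_addr.
    by apply/eqP => /ffunP /(_ j); rewrite ffunE eqxx addn1 => /n_Sn.
  apply/forallP => k; rewrite !ffunE; case: eqP => [->|_]; last by rewrite addn0 leq_maxl.
  by rewrite addn1 leq_max ltj orbT.
Qed.

Lemma dp_rank_indep_vectors A : dp_rank indep_vectors A = rho A.
Proof.
apply/eqP; rewrite eqn_leq; apply/andP; split.
  rewrite /dp_rank big_seq; apply: (big_ind (fun x => x <= rho A)) => //.
    by move=> x y hx hy; rewrite geq_max hx hy.
  by move=> u; rewrite mem_indep_vectors => /forallP /(_ A).
have [u iu <-] := rho_indep_greedy A.
by apply: (@leq_bigmax_seq _ _ xpredT (fun u => wsum u A)); rewrite ?mem_indep_vectors.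
Qed.

End SubmodularPolymatroid.

Local Open Scope ring_scope.

Section SubspaceArrangement.

Variables (F : fieldType) (N d : nat) (V : 'I_N -> 'M[F]_d).

Definition arr_span (A : {set 'I_N}) : 'M[F]_d := (\sum_(j in A) V j)%MS.

Lemma arr_span_sub (A : {set 'I_N}) k (W : 'M[F]_(k, d)) :
  (forall j, j \in A -> (V j <= W)%MS) -> (arr_span A <= W)%MS.
Proof. by move=> h; apply/sumsmx_subP. Qed.

Lemma sub_arr_span (A : {set 'I_N}) j : j \in A -> (V j <= arr_span A)%MS.
Proof. by move=> jA; apply: (sumsmx_sup j). Qed.

Lemma arr_spanS (A B : {set 'I_N}) : A \subset B -> (arr_span A <= arr_span B)%MS.
Proof. by move=> AB; apply: arr_span_sub => j /(subsetP AB); apply: sub_arr_span. Qed.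

Lemma arr_span1 j : arr_span [set j] = V j.
Proof. by rewrite /arr_span big_set1. Qed.

Lemma arr_spanU (A B : {set 'I_N}) : (arr_span (A :|: B) :=: arr_span A + arr_span B)%MS.
Proof.
apply/eqmxP; rewrite addsmx_sub !arr_spanS ?subsetUl ?subsetUr // !andbT.
apply: arr_span_sub => j; rewrite inE => /orP[jA|jB].
  by apply: submx_trans (addsmxSl _ _); apply: sub_arr_span.
by apply: submx_trans (addsmxSr _ _); apply: sub_arr_span.
Qed.

Lemma arr_span_mul0 (A : {set 'I_N}) p (phi : 'M[F]_(d, p)) :
  (forall j, j \in A -> V j *m phi = 0) -> arr_span A *m phi = 0.
Proof.
move=> h; apply/eqP; rewrite -sub_kermx; apply: arr_span_sub => j /h.
by rewrite sub_kermx => ->.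
Qed.

Lemma mxrank_arr_span_submod (A B : {set 'I_N}) :
  (\rank (arr_span (A :|: B)) + \rank (arr_span (A :&: B))
     <= \rank (arr_span A) + \rank (arr_span B))%N.
Proof.
rewrite -(mxrank_sum_cap (arr_span A) (arr_span B)) leq_add //.
  by rewrite arr_spanU.
apply: mxrankS; apply: arr_span_sub => j; rewrite inE => /andP[jA jB].
by rewrite sub_capmx !sub_arr_span.
Qed.

Lemma mxrank_arr_span_setU1 (A : {set 'I_N}) j :
  \rank (arr_span (j |: A)) = \rank (arr_span A) <-> (V j <= arr_span A)%MS.
Proof.
rewrite arr_spanU arr_span1.
have := mxrank_leqif_sup (addsmxSr (V j) (arr_span A)); rewrite addsmx_sub submx_refl andbT.
by case=> _ <-; split => [->|/eqP].
Qed.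

Lemma mxrank_arr_span_contract (T A : {set 'I_N}) j :
  (\rank (arr_span ((j |: A) :|: T)) - \rank (arr_span T)
     = \rank (arr_span (A :|: T)) - \rank (arr_span T))%N
  <-> (V j <= arr_span (A :|: T))%MS.
Proof.
rewrite -setUA -mxrank_arr_span_setU1.
have rT : (\rank (arr_span T) <= \rank (arr_span (A :|: T)))%N.
  exact/mxrankS/arr_spanS/subsetUr.
have rAT : (\rank (arr_span (A :|: T)) <= \rank (arr_span (j |: (A :|: T))))%N.
  exact/mxrankS/arr_spanS/subsetUr.
by split=> [|->]; lia.
Qed.

Lemma mxrank_arr_span_exchange (M : {set 'I_N}) a b :
  (\rank (arr_span (M :|: [set a; b])) = \rank (arr_span (M :|: [set a]))
   /\ \rank (arr_span (M :|: [set a])) = \rank (arr_span (M :|: [set b])))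
  <-> (V b <= arr_span (M :|: [set a]))%MS /\ (V a <= arr_span (M :|: [set b]))%MS.
Proof.
have eab : M :|: [set a; b] = b |: (M :|: [set a]) by rewrite setUA setUC.
have eba : M :|: [set a; b] = a |: (M :|: [set b]) by rewrite setUCA.
rewrite eab -!mxrank_arr_span_setU1 -eab eba; split=> [[-> <-]|[<- ->]] //.
Qed.

Lemma arrangement_polymatroid :
  exists D, [/\ is_discrete_polymatroid D, dp_representable F D &
             forall A, dp_rank D A = \rank (arr_span A)].
Proof.
pose rho A := \rank (arr_span A).
have rho0 : rho set0 = 0%N by rewrite /rho /arr_span big_set0 mxrank0.
have rho_mono (A B : {set 'I_N}) : A \subset B -> (rho A <= rho B)%N.
  by move=> AB; apply/mxrankS/arr_spanS.
have rankD := dp_rank_indep_vectors rho0 rho_mono mxrank_arr_span_submod.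
exists (indep_vectors rho); split => //.
- exact: indep_vectors_polymatroid rho0 rho_mono mxrank_arr_span_submod.
- by exists d, V => A; rewrite rankD.
Qed.

End SubspaceArrangement.

Lemma submx_mul0 (F : fieldType) a b d p (A : 'M[F]_(a, d)) (B : 'M[F]_(b, d))
    (phi : 'M[F]_(d, p)) :
  (A <= B)%MS -> B *m phi = 0 -> A *m phi = 0.
Proof. by move=> AB /sub_kermxP Bphi0; apply/sub_kermxP; apply: submx_trans AB Bphi0. Qed.

Definition rank_basis (F : fieldType) p d k (A : 'M[F]_(p, d)) (e : \rank A = k) :
  'M[F]_(k, d) := castmx (e, erefl d) (row_base A).

Lemma eqmx_rank_basis (F : fieldType) p d k (A : 'M[F]_(p, d)) (e : \rank A = k) :
  (rank_basis e :=: A)%MS.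
Proof. exact: eqmx_trans (eqmx_cast _ _) (eq_row_base A). Qed.

Lemma submx_annihilators (F : fieldType) k d (A : 'M[F]_(k, d)) (W : 'M[F]_d) :
  (forall phi : 'cV_d, W *m phi = 0 -> A *m phi = 0) -> (A <= W)%MS.
Proof.
move=> h; rewrite submxE; apply/eqP/matrixP => a q.
have Wq0 : W *m (cokermx W *m (delta_mx q 0 : 'cV_d)) = 0 by rewrite mulmxA mulmx_coker mul0mx.
by move: (h _ Wq0); rewrite mulmxA => /matrixP /(_ a 0); rewrite -colE !mxE.
Qed.

Definition mxvec_unindex m n (p : 'I_(m * n)) : 'I_m * 'I_n :=
  enum_val (cast_ord (esym (mxvec_cast m n)) p).

Lemma mxvec_indexK m n (j : 'I_m) (k : 'I_n) : mxvec_unindex (mxvec_index j k) = (j, k).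
Proof. by rewrite /mxvec_unindex cast_ordK enum_rankK. Qed.

Lemma extend_to_card (T : finType) (S : {set T}) k : (#|S| <= k <= #|T|)%N ->
  exists2 S' : {set T}, S \subset S' & #|S'| = k.
Proof.
elim: k => [|k IH] /andP[hS hk].
  by move: hS; rewrite leqn0 => /eqP/cards0_eq ->; exists set0; rewrite ?cards0.
case: (ltnP #|S| k.+1) => h; last by exists S => //; apply/eqP; rewrite eqn_leq hS h.
have [|S' SS' cS'] := IH; first by rewrite -ltnS h ltnW.
have /card_gt0P[x] : (0 < #|~: S'|)%N by rewrite cardsCs setCK cS'; lia.
rewrite inE => xS'; exists (x |: S'); last by rewrite cardsU1 xS' cS'.
exact: subset_trans SS' (subsetUr _ _).
Qed.

Section HammingWeight.

Variables (F : fieldType) (c : nat).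

Lemma hweight_le_card (e : 'rV[F]_c) (S : {set 'I_c}) :
  (forall l, l \notin S -> e 0 l = 0) -> (hweight e <= #|S|)%N.
Proof.
move=> supp; apply: subset_leq_card; apply/subsetP => l; rewrite inE.
by apply: contraR => /supp ->; rewrite eqxx.
Qed.

Lemma hweightN (e : 'rV[F]_c) : hweight (- e) = hweight e.
Proof. by apply: eq_card => l; rewrite !inE mxE oppr_eq0. Qed.

Lemma hweightB (e e' : 'rV[F]_c) : (hweight (e - e') <= hweight e + hweight e')%N.
Proof.
apply: leq_trans (leq_card_setU _ _); apply: hweight_le_card => l.
by rewrite !inE negb_or !negbK => /andP[/eqP e0 /eqP e'0]; rewrite !mxE e0 e'0 subr0.
Qed.

Lemma hweight_split (y : 'rV[F]_c) (S : {set 'I_c}) a b :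
    (forall l, l \notin S -> y 0 l = 0) -> (#|S| <= a + b)%N ->
  exists e1 e2 : 'rV[F]_c, [/\ y = e1 + e2, (hweight e1 <= a)%N & (hweight e2 <= b)%N].
Proof.
move=> supp cS; pose A := [set l in take a (enum S)].
pose e1 : 'rV[F]_c := \row_l (if l \in A then y 0 l else 0).
exists e1, (y - e1); split; first by rewrite addrC subrK.
  apply: leq_trans (hweight_le_card (S := A) _) _.
    by move=> l; rewrite mxE => /negbTE ->.
  by rewrite cardsE (leq_trans (card_size _)) // size_take; case: ifP => // /negbT; lia.
apply: leq_trans (hweight_le_card (S := [set l in drop a (enum S)]) _) _.
  move=> l; rewrite !mxE inE; case lA: (l \in A); first by rewrite subrr.
  rewrite subr0; apply: contraNeq => yl; move: lA; rewrite inE.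
  have lS : l \in S by apply: contraR yl => /supp ->; rewrite eqxx.
  by rewrite -mem_enum -(cat_take_drop a (enum S)) mem_cat in lS; case/orP: lS => ->.
by rewrite cardsE (leq_trans (card_size _)) // size_drop -cardE; lia.
Qed.

End HammingWeight.

Section KernelDecodability.

Variables (F : fieldType) (m n c N : nat).
Variables (f : 'I_N -> 'I_m) (H : 'I_N -> {set 'I_m}) (delta : 'I_N -> nat).
Variable L : 'M[F]_(m * n, c).

(* Linearity reduces decoding to the difference [Z] of two confusable message
   matrices: no [Z] invisible to receiver [i] and with a codeword supported on
   [2 delta i] coordinates may have a nonzero demanded row. *)
Definition kernel_decodable : Prop :=
  forall i (Fs : {set 'I_c}) (Z : 'M[F]_(m, n)), #|Fs| = (2 * delta i)%N ->
    side_info (H i) Z = 0 -> (forall l, l \notin Fs -> (msg_vec Z *m L) 0 l = 0) ->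
    row (f i) Z = 0.

Lemma side_info0 (Hi : {set 'I_m}) : side_info Hi (0 : 'M[F]_(m, n)) = 0.
Proof. by apply/matrixP => j k; rewrite !mxE if_same. Qed.

Lemma kernel_decodable_of_ecic : is_vl_diff_ecic f H delta L -> kernel_decodable.
Proof.
move=> hL i Fs Z cF side0 supp; have [psi hpsi] := hL i.
have cF2 : (#|Fs| <= delta i + delta i)%N by rewrite cF addnn -mul2n.
have [e1 [e2 [ye w1 w2]]] := hweight_split supp cF2.
have w1N : (hweight (- e1) <= delta i)%N by rewrite hweightN.
have := hpsi 0 e2 w2; rewrite /msg_vec linear0 mul0mx add0r side_info0 row0.
by rewrite -(hpsi Z (- e1) w1N) side0 ye [e1 + e2]addrC addrK.
Qed.

End KernelDecodability.

Lemma ecic_of_kernel_decodable (F : finFieldType) (m n c N : nat)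
    (f : 'I_N -> 'I_m) (H : 'I_N -> {set 'I_m}) (delta : 'I_N -> nat)
    (L : 'M[F]_(m * n, c)) :
  (forall i, (2 * delta i <= c)%N) -> kernel_decodable f H delta L ->
  is_vl_diff_ecic f H delta L.
Proof.
move=> hdelta hker i.
exists (fun y s => row (f i) (odflt 0 [pick X' : 'M[F]_(m, n) |
  (side_info (H i) X' == s) &&
  [exists e : 'rV[F]_c, (hweight e <= delta i)%N && (msg_vec X' *m L + e == y)]])).
move=> X eps weps; case: pickP => [X' /andP[/eqP side /existsP[e /andP[we /eqP ye]]] | /(_ X)];
  last by rewrite eqxx /=; case/existsP; exists eps; rewrite weps eqxx.
pose S := [set l | (eps - e) 0 l != 0].
have [|Fs SFs cFs] := @extend_to_card _ S (2 * delta i).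
  rewrite card_ord hdelta andbT; apply: leq_trans (hweightB _ _) _; lia.
apply/eqP; rewrite /= -subr_eq0 -linearB /=; apply/eqP.
apply: (hker i Fs) => // [|l lFs].
  apply/matrixP => j k; move/matrixP: side => /(_ j k).
  by rewrite !mxE; case: ifP => // _ ->; rewrite subrr.
rewrite /msg_vec linearB mulmxBl /= -/(msg_vec X') -/(msg_vec X).
have -> : msg_vec X' *m L = msg_vec X *m L + (eps - e) by rewrite addrA -ye addrK.
rewrite addrAC subrr add0r.
have : l \notin S by apply: contra lFs; apply: (subsetP SFs).
by rewrite inE negbK => /eqP.
Qed.

Lemma mem_Msgs m c j : gmsg c j \in Msgs m c. Proof. exact: imset_f. Qed.
Lemma mem_Codes m c l : gcode m l \in Codes m c. Proof. exact: imset_f. Qed.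
Lemma mem_Sset m c l : gS m l \in Sset m c. Proof. exact: imset_f. Qed.

Lemma gmsg_in_Tset m c (Hi : {set 'I_m}) (Fs : {set 'I_c}) j :
  j \in Hi -> gmsg c j \in Tset Hi Fs.
Proof.
move=> jH; rewrite !inE mem_Msgs andbT negb_or; apply/andP; split.
  by apply/imsetP => -[j' j'H /lshift_inj ej]; move: j'H; rewrite inE -ej jH.
by apply/imsetP => -[l _ /eqP]; rewrite eq_lrshift.
Qed.

Lemma gcode_in_Tset m c (Hi : {set 'I_m}) (Fs : {set 'I_c}) l :
  l \notin Fs -> gcode m l \in Tset Hi Fs.
Proof.
move=> lF; rewrite !inE mem_Codes orbT andbT negb_or; apply/andP; split.
  by apply/imsetP => -[j _ /eqP]; rewrite eq_rlshift.
by apply/imsetP => -[l' l'F /rshift_inj /lshift_inj el]; rewrite el l'F in lF.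
Qed.

Lemma TsetP m c (Hi : {set 'I_m}) (Fs : {set 'I_c}) k : k \in Tset Hi Fs ->
  (exists2 j, j \in Hi & k = gmsg c j) \/ (exists2 l, l \notin Fs & k = gcode m l).
Proof.
rewrite !inE negb_or => /andP[/andP[kHbar kFs] /orP[/imsetP[j _ ek]|/imsetP[l _ ek]]];
  subst k.
  by left; exists j => //; apply: contraNT kHbar => jH; apply: imset_f; rewrite inE.
by right; exists l => //; apply: contra kFs => lFs; apply: imset_f.
Qed.

Section CodeArrangement.

Variables (F : fieldType) (m n c : nat) (L : 'M[F]_(m * n, c)).

Definition msg_gens (j : 'I_m) : 'M[F]_(n, m * n + c) :=
  \matrix_k delta_mx 0 (lshift c (mxvec_index j k)).

Definition code_msg_part (l : 'I_c) : 'rV[F]_(m * n + c) := row_mx (col l L)^T 0.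

Definition coord_vec (l : 'I_c) : 'rV[F]_(m * n + c) := row_mx 0 (delta_mx 0 l).

Definition code_vec (l : 'I_c) : 'rV[F]_(m * n + c) := code_msg_part l + coord_vec l.

(* Coordinates [1..mn] of [F^(mn+c)] carry the message, coordinate [mn+l] the
   [l]-th code symbol; [code_vec l] pairs the symbol with the column of [L]
   computing it, and [coord_vec l] is the bare symbol. *)
Definition code_arrangement (k : 'I_(m + (c + c))) : 'M[F]_(m * n + c) :=
  match split k with
  | inl j => <<msg_gens j>>
  | inr k' => match split k' with
              | inl l => <<code_vec l>>
              | inr l => <<coord_vec l>>
              end
  end%MS.

Local Notation V := code_arrangement.
Local Notation span := (arr_span code_arrangement).

Lemma code_arrangement_msg j : V (gmsg c j) = <<msg_gens j>>%MS.
Proof. by rewrite /V /gmsg (unsplitK (inl _)). Qed.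

Lemma code_arrangement_code l : V (gcode m l) = <<code_vec l>>%MS.
Proof. by rewrite /V /gcode (unsplitK (inr _)) (unsplitK (inl _)). Qed.

Lemma code_arrangement_coord l : V (gS m l) = <<coord_vec l>>%MS.
Proof. by rewrite /V /gS (unsplitK (inr _)) (unsplitK (inr _)). Qed.

Lemma row_msg_gens j k : row k (msg_gens j) = delta_mx 0 (lshift c (mxvec_index j k)).
Proof. exact: rowK. Qed.

Lemma msg_part_sub_Msgs (a : 'rV[F]_(m * n)) : (row_mx a 0 <= span (Msgs m c))%MS.
Proof.
rewrite -[a]mulmx1 -(mulmx0 _ a) -mul_mx_row; apply: submx_trans (submxMl _ _) _.
apply/row_subP => q; rewrite row_row_mx row1 row0 -delta_mx_lshift.
case/mxvec_indexP: q => j k; apply: (submx_trans _ (sub_arr_span _ (@mem_Msgs m c j))).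
by rewrite code_arrangement_msg genmxE -row_msg_gens row_sub.
Qed.

Lemma coord_sub_Msgs_code l :
  (V (gS m l) <= span (Msgs m c :|: [set gcode m l]))%MS.
Proof.
rewrite code_arrangement_coord genmxE arr_spanU arr_span1 code_arrangement_code.
have -> : coord_vec l = code_vec l - code_msg_part l by rewrite addrC addKr.
rewrite addsmxC; apply: addmx_sub_adds; first by rewrite genmxE.
by rewrite /code_msg_part opp_row_mx oppr0 msg_part_sub_Msgs.
Qed.

Lemma code_sub_Msgs_coord l :
  (V (gcode m l) <= span (Msgs m c :|: [set gS m l]))%MS.
Proof.
rewrite code_arrangement_code genmxE arr_spanU arr_span1 code_arrangement_coord.
by apply: addmx_sub_adds; rewrite ?genmxE //; apply: msg_part_sub_Msgs.
Qed.

Lemma mxrank_arr_span_full (A : {set 'I_(m + (c + c))}) :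
  Msgs m c :|: Codes m c \subset A -> \rank (span A) = (m * n + c)%N.
Proof.
move=> MCA; apply/eqP; rewrite eqn_leq rank_leq_col -{1}(mxrank1 F (m * n + c)) mxrankS //.
apply/row_subP => p; rewrite row1 -(splitK p); case: (split p) => q /=.
  rewrite delta_mx_lshift; apply: submx_trans (msg_part_sub_Msgs _) _.
  by apply/arr_spanS/(subset_trans _ MCA)/subsetUl.
have coord_q : (coord_vec q <= V (gS m q))%MS by rewrite code_arrangement_coord genmxE.
rewrite delta_mx_rshift; apply: submx_trans coord_q (submx_trans (coord_sub_Msgs_code q) _).
apply: arr_spanS; apply: subset_trans MCA; rewrite setUS // sub1set.
exact: mem_Codes.
Qed.

Lemma mxrank_code_arrangement_msg j : \rank (V (gmsg c j)) = n.
Proof.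
rewrite code_arrangement_msg genmxE; apply/eqP; apply/inj_row_free => v /rowP vmsg0.
apply/rowP => k; move: (vmsg0 (lshift c (mxvec_index j k))).
rewrite !mxE (bigD1 k) //= big1 ?addr0 => [|k' k'k]; first by rewrite !mxE !eqxx mulr1.
rewrite !mxE eq_lshift eqxx /=; case: eqP => [/cast_ord_inj /enum_rank_inj [ekk]|_].
  by rewrite ekk eqxx in k'k.
by rewrite mulr0.
Qed.

Lemma mxrank_code_arrangement_high (k : 'I_(m + (c + c))) : (m <= k)%N -> \rank (V k) = 1%N.
Proof.
have rank1 (v : 'rV[F]_(m * n + c)) l : v 0 (rshift _ l) = 1 -> \rank <<v>>%MS = 1%N.
  move=> v1; rewrite genmxE rank_rV; apply/eqP; rewrite eqb1; apply/eqP => /rowP.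
  by move/(_ (rshift _ l)); rewrite v1 mxE; apply/eqP; rewrite oner_eq0.
rewrite -(splitK k); case: (split k) => [j|k'] /=; first by rewrite leqNgt ltn_ord.
rewrite -(splitK k'); case: (split k') => l _ /=.
  rewrite -/(gcode m l) code_arrangement_code (rank1 _ l) //.
  by rewrite /code_vec add_row_mx row_mxEr add0r mxE !eqxx.
by rewrite -/(gS m l) code_arrangement_coord (rank1 _ l) // row_mxEr mxE !eqxx.
Qed.

Lemma code_arrangement_decodes N (f : 'I_N -> 'I_m) (H : 'I_N -> {set 'I_m})
    (delta : 'I_N -> nat) i (Fs : {set 'I_c}) :
  kernel_decodable f H delta L -> #|Fs| = (2 * delta i)%N ->
  (V (gmsg c (f i)) <= span (Sset m c :|: Tset (H i) Fs))%MS.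
Proof.
move=> hker cFs; rewrite code_arrangement_msg genmxE.
apply: submx_annihilators => phi Wphi0.
have kill k (A : 'M_(1, m * n + c)) :
    k \in Sset m c :|: Tset (H i) Fs -> (A <= V k)%MS -> A *m phi = 0.
  by move=> kST AVk; apply: (submx_mul0 _ Wphi0); apply: submx_trans AVk (sub_arr_span _ kST).
pose Z := vec_mx (usubmx phi)^T.
have ZE j k : Z j k = (row k (msg_gens j) *m phi) 0 0.
  by rewrite row_msg_gens -rowE !mxE.
have side : side_info (H i) Z = 0.
  apply/matrixP => j k; rewrite [LHS]mxE [RHS]mxE; case: ifP => // jH.
  rewrite ZE (kill (gmsg c j)) ?mxE //.
    by rewrite inE gmsg_in_Tset ?orbT.
  by rewrite code_arrangement_msg genmxE row_sub.
have supp l : l \notin Fs -> (msg_vec Z *m L) 0 l = 0.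
  move=> lFs; have : code_msg_part l *m phi = 0.
    have -> : code_msg_part l = code_vec l - coord_vec l by rewrite addrK.
    rewrite mulmxBl (kill (gcode m l)) ?(kill (gS m l)) ?subrr //.
    - by rewrite inE mem_Sset.
    - by rewrite code_arrangement_coord genmxE.
    - by rewrite inE gcode_in_Tset ?orbT.
    - by rewrite code_arrangement_code genmxE.
  rewrite -[phi]vsubmxK mul_row_col mul0mx addr0 => /rowP /(_ 0); rewrite !mxE => h0.
  by rewrite -[RHS]h0 /msg_vec vec_mxK; apply: eq_bigr => p _; rewrite !mxE mulrC.
move/rowP: (hker i Fs Z cFs side supp) => Zf0.
apply/row_matrixP => k; rewrite row_mul row0; apply/rowP => a.
by rewrite ord1 [RHS]mxE -ZE; move: (Zf0 k); rewrite [LHS]mxE [RHS]mxE.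
Qed.

End CodeArrangement.

Section ArrangementCode.

Variables (F : fieldType) (m n c d : nat) (V : 'I_(m + (c + c)) -> 'M[F]_d).
Hypothesis rank_msg : forall j, \rank (V (gmsg c j)) = n.
Hypothesis rank_code : forall l, \rank (V (gcode m l)) = 1%N.
Hypothesis rank_coord : forall l, \rank (V (gS m l)) = 1%N.
Hypothesis rank_Msgs_Codes : \rank (arr_span V (Msgs m c :|: Codes m c)) = (m * n + c)%N.
Hypothesis coord_sub : forall l, (V (gS m l) <= arr_span V (Msgs m c :|: [set gcode m l]))%MS.
Hypothesis code_sub : forall l, (V (gcode m l) <= arr_span V (Msgs m c :|: [set gS m l]))%MS.

Local Notation span := (arr_span V).

Definition msg_basis j : 'M[F]_(n, d) := rank_basis (rank_msg j).
Definition code_basis l : 'rV[F]_d := rank_basis (rank_code l).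
Definition coord_basis l : 'rV[F]_d := rank_basis (rank_coord l).

Definition msg_stack : 'M[F]_(m * n, d) :=
  \matrix_p row (mxvec_unindex p).2 (msg_basis (mxvec_unindex p).1).
Definition code_stack : 'M[F]_(c, d) := \matrix_l code_basis l.

Definition basis_stack : 'M[F]_(m * n + c, d) := col_mx msg_stack code_stack.

Lemma row_msg_stack j k : row (mxvec_index j k) msg_stack = row k (msg_basis j).
Proof. by rewrite rowK mxvec_indexK. Qed.

Lemma msg_stack_eqmx : (msg_stack :=: span (Msgs m c))%MS.
Proof.
apply/eqmxP/andP; split.
  apply/row_subP => p; case/mxvec_indexP: p => j k; rewrite row_msg_stack.
  apply: submx_trans (row_sub _ _) _; rewrite eqmx_rank_basis.
  by apply: sub_arr_span; apply: mem_Msgs.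
apply: arr_span_sub => _ /imsetP[j _ ->]; rewrite -(eqmx_rank_basis (rank_msg j)).
by apply/row_subP => k; rewrite -row_msg_stack row_sub.
Qed.

Lemma code_stack_eqmx : (code_stack :=: span (Codes m c))%MS.
Proof.
apply/eqmxP/andP; split.
  apply/row_subP => l; rewrite rowK eqmx_rank_basis.
  by apply: sub_arr_span; apply: mem_Codes.
apply: arr_span_sub => _ /imsetP[l _ ->]; rewrite -(eqmx_rank_basis (rank_code l)).
by rewrite -[rank_basis _](rowK code_basis) row_sub.
Qed.

Lemma basis_stack_free : row_free basis_stack.
Proof.
rewrite /row_free -addsmxE (adds_eqmx msg_stack_eqmx code_stack_eqmx).
by rewrite -arr_spanU rank_Msgs_Codes.
Qed.

Lemma span_Msgs_set1 k : (span (Msgs m c :|: [set k]) :=: msg_stack + V k)%MS.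
Proof.
apply: eqmx_trans (arr_spanU _ _ _) _; rewrite arr_span1.
exact: adds_eqmx (eqmx_sym msg_stack_eqmx) (eqmx_refl _).
Qed.

Lemma code_basis_notin_msgs l : ~~ (code_basis l <= msg_stack)%MS.
Proof.
apply/negP => /submxP[v codev].
have : delta_mx 0 (rshift (m * n) l) *m basis_stack = row_mx v 0 *m basis_stack.
  by rewrite -rowE rowKd rowK codev mul_row_col mul0mx addr0.
move/(row_free_inj basis_stack_free)/rowP/(_ (rshift _ l)).
by rewrite row_mxEr !mxE !eqxx; apply/eqP; rewrite oner_eq0.
Qed.

Definition coord_coefs l : 'rV[F]_(m * n + c) := coord_basis l *m pinvmx basis_stack.

(* [coord_basis l] lies in [msg_stack + code_basis l] but not in [msg_stack], since
   [code_basis l] lies in [msg_stack + coord_basis l] and not in [msg_stack]. *)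
Lemma coord_coefsE l :
  exists v, exists2 b, b != 0 & coord_coefs l = row_mx v (b *: delta_mx 0 l).
Proof.
have: (coord_basis l <= msg_stack + code_basis l)%MS.
  rewrite eqmx_rank_basis (adds_eqmx (eqmx_refl _) (eqmx_rank_basis _)) -span_Msgs_set1.
  exact: coord_sub.
case/sub_addsmxP=> -[v w] /= coordE; rewrite [w]mx11_scalar mul_scalar_mx in coordE.
exists v, (w 0 0).
  apply: contra (code_basis_notin_msgs l) => /eqP w0.
  have coord_msg : (coord_basis l <= msg_stack)%MS by rewrite coordE w0 scale0r addr0 submxMl.
  apply: submx_trans (_ : code_basis l <= msg_stack + coord_basis l)%MS _.
    rewrite eqmx_rank_basis (adds_eqmx (eqmx_refl _) (eqmx_rank_basis _)) -span_Msgs_set1.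
    exact: code_sub.
  by rewrite addsmx_sub submx_refl coord_msg.
rewrite /coord_coefs coordE.
have -> : w 0 0 *: code_basis l = (w 0 0 *: delta_mx 0 l) *m code_stack.
  by rewrite -scalemxAl -rowE rowK.
by rewrite -mul_row_col (mulmxKp basis_stack_free).
Qed.

(* Choose column [l] of the code so that the functional [coord_coefs l] vanishes
   on every vector [(y, yL)]. *)
Definition arrangement_code : 'M[F]_(m * n, c) :=
  \matrix_(p, l) (- coord_coefs l 0 (lshift c p) / coord_coefs l 0 (rshift (m * n) l)).

Lemma coord_coefs_orthogonal l (y : 'rV[F]_(m * n)) :
  coord_coefs l *m (row_mx y (y *m arrangement_code))^T = 0.
Proof.
have [v [b b0 coefsE]] := coord_coefsE l.
apply/rowP => a; rewrite ord1 tr_row_mx coefsE mul_row_col -scalemxAl -rowE !mxE.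
rewrite mulr_sumr -big_split big1 //= => p _.
rewrite [y^T _ _]mxE [arrangement_code _ _]mxE coefsE row_mxEl row_mxEr.
by rewrite !mxE !eqxx mulr1; field.
Qed.

Lemma arrangement_code_decodes N (f : 'I_N -> 'I_m) (H : 'I_N -> {set 'I_m})
    (delta : 'I_N -> nat) :
  (forall i (Fs : {set 'I_c}), #|Fs| = (2 * delta i)%N ->
     (V (gmsg c (f i)) <= span (Sset m c :|: Tset (H i) Fs))%MS) ->
  kernel_decodable f H delta arrangement_code.
Proof.
move=> decodes i Fs Z cFs side supp.
pose w := row_mx (msg_vec Z) (msg_vec Z *m arrangement_code).
pose phi := pinvmx basis_stack *m w^T.
have stack_phi p : row p basis_stack *m phi = (w 0 p)%:M.
  apply/rowP => a; rewrite ord1 mulmxA -row_mul (mulmxVp basis_stack_free) row1.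
  by rewrite -rowE !mxE eqxx.
have msg_phi j k : row k (msg_basis j) *m phi = (Z j k)%:M.
  by rewrite -row_msg_stack -(rowKu _ _ code_stack) stack_phi row_mxEl mxvecE.
have code_phi l : code_basis l *m phi = ((msg_vec Z *m arrangement_code) 0 l)%:M.
  by rewrite -[code_basis l](rowK code_basis) -(rowKd _ msg_stack) stack_phi row_mxEr.
have coord_phi l : coord_basis l *m phi = 0.
  by rewrite mulmxA coord_coefs_orthogonal.
have scalar0 (x : F) : x = 0 -> x%:M = 0 :> 'M_1 by move->; rewrite raddf0.
have kill k : k \in Sset m c :|: Tset (H i) Fs -> V k *m phi = 0.
  rewrite inE => /orP[/imsetP[l _ ->]|/TsetP[[j jH ->]|[l lFs ->]]].
  - by apply: submx_mul0 (coord_phi l); rewrite /coord_basis eqmx_rank_basis.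
  - apply: (submx_mul0 (B := msg_basis j)); first by rewrite /msg_basis eqmx_rank_basis.
    apply/row_matrixP => k'; rewrite row_mul msg_phi row0; apply: scalar0.
    by move/matrixP: side => /(_ j k'); rewrite !mxE jH.
  - apply: (submx_mul0 (B := code_basis l)); first by rewrite /code_basis eqmx_rank_basis.
    by rewrite code_phi; apply: scalar0; apply: supp.
have /row_matrixP f0 : msg_basis (f i) *m phi = 0.
  apply: submx_mul0 (arr_span_mul0 kill).
  by rewrite /msg_basis eqmx_rank_basis; apply: decodes.
apply/rowP => k; move: (f0 k); rewrite row_mul msg_phi row0 => /matrixP /(_ 0 0).
by rewrite !mxE eqxx mulr1n.
Qed.

End ArrangementCode.

Theorem theorem1 (F : finFieldType) (m n c N : nat)
  (f : 'I_N -> 'I_m) (H : 'I_N -> {set 'I_m}) (delta : 'I_N -> nat)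
  (hH : forall i, f i \notin H i)
  (hdelta : forall i, (2 * delta i <= c)%N) :
  (exists L : 'M[F]_(m * n, c), is_vl_diff_ecic f H delta L)
  <->
  (exists D : seq {ffun 'I_(m + (c + c)) -> nat},
     [/\ is_discrete_polymatroid D /\ dp_representable F D,
         dp_rank D setT = (m * n + c)%N,
         (* (A) *)
         [/\ forall j : 'I_m, dp_rank D [set gmsg c j] = n,
             dp_rank D (Msgs m c :|: Codes m c) = (m * n + c)%N &
             forall k : 'I_(m + (c + c)), (m <= k)%N -> dp_rank D [set k] = 1%N],
         (* (B) *)
         (forall j : 'I_c,
            dp_rank D (Msgs m c :|: [set gcode m j; gS m j])
              = dp_rank D (Msgs m c :|: [set gcode m j])
            /\ dp_rank D (Msgs m c :|: [set gcode m j])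
              = dp_rank D (Msgs m c :|: [set gS m j])) &
         (* (C) *)
         (forall (i : 'I_N) (Fs : {set 'I_c}), #|Fs| = (2 * delta i)%N ->
            dp_contract_rank D (Tset (H i) Fs) (gmsg c (f i) |: Sset m c)
              = dp_contract_rank D (Tset (H i) Fs) (Sset m c))]).
Proof.
split.
  case=> L /kernel_decodable_of_ecic decodable.
  have [D [Dpoly Drep Drank]] := arrangement_polymatroid (code_arrangement L).
  exists D; split=> //; rewrite ?Drank.
  - exact: mxrank_arr_span_full.
  - split=> [j | | k mk]; rewrite ?Drank ?arr_span1.
    + exact: mxrank_code_arrangement_msg.
    + exact: mxrank_arr_span_full.
    + exact: mxrank_code_arrangement_high.
  - by move=> l; rewrite !Drank; apply/mxrank_arr_span_exchange; split;
      [apply: coord_sub_Msgs_code | apply: code_sub_Msgs_coord].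
  - move=> i Fs cFs; rewrite /dp_contract_rank !Drank.
    by apply/mxrank_arr_span_contract; apply: code_arrangement_decodes decodable cFs.
case=> D [[_ [d [V Vrank]]] _ [rank_msgD rank_MCD rank_highD] exchangeD decodesD].
have rankV A : dp_rank D A = \rank (arr_span V A) by rewrite -Vrank.
have rank_msg j : \rank (V (gmsg c j)) = n by rewrite -arr_span1 -rankV.
have rank_code l : \rank (V (gcode m l)) = 1%N.
  by rewrite -arr_span1 -rankV rank_highD ?leq_addr.
have rank_coord l : \rank (V (gS m l)) = 1%N.
  by rewrite -arr_span1 -rankV rank_highD ?leq_addr.
have rank_MC : \rank (arr_span V (Msgs m c :|: Codes m c)) = (m * n + c)%N.
  by rewrite -rankV.
have exchange l : (V (gS m l) <= arr_span V (Msgs m c :|: [set gcode m l]))%MS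
                  /\ (V (gcode m l) <= arr_span V (Msgs m c :|: [set gS m l]))%MS.
  by apply/mxrank_arr_span_exchange; rewrite -!rankV.
exists (arrangement_code rank_msg rank_code rank_coord).
apply: ecic_of_kernel_decodable hdelta _.
apply: (arrangement_code_decodes rank_MC (fun l => (exchange l).1) (fun l => (exchange l).2)).
by move=> i Fs /decodesD; rewrite /dp_contract_rank !rankV => /mxrank_arr_span_contract.
Qed.
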